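(* Let $(N_r)_{r\in\mathbb{Z}}$ be the Narayana sequence and for $1\le b\le 4$ and $r\ge 0$ let $S_{N,r}^{(4,b)}=\sum_{k=0}^{r}N_{4k+b}$. Then for every $r\ge 3$, $$S_{N,r}^{(4,b)}=5S_{N,r-1}^{(4,b)}-2S_{N,r-2}^{(4,b)}+S_{N,r-3}^{(4,b)}+c_b,$$ where $c_1=-1$, $c_2=c_4=1$ and $c_3=2$.
   Context: The Narayana sequence $(N_r)_{r\in\mathbb{Z}}$ is defined by $N_0=0$, $N_1=N_2=1$ and $N_r=N_{r-1}+N_{r-3}$ for all integers $r$. *)

From Stdlib Require Import ZArith.
Open Scope Z_scope.

(* Narayana sequence N_0 = 0, N_1 = N_2 = 1, N_r = N_{r-1} + N_{r-3}.
   Only nonnegative indices are needed for the statement. *)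
Fixpoint narayana (n : nat) : Z :=
  match n with
  | O => 0
  | S O => 1
  | S (S O) => 1
  | S ((S (S m)) as p) => narayana p + narayana m
  end.

Fixpoint S4 (b r : nat) : Z :=
  match r with
  | O => narayana b
  | S r' => S4 b r' + narayana (4 * r + b)
  end.

Definition cb (b : nat) : Z :=
  match b with
  | 1%nat => -1
  | 2%nat => 1
  | 3%nat => 2
  | _ => 1
  end.

(* The quadrisected Narayana sequence N_{4k+b} satisfies the recurrence with
   characteristic polynomial y^3 - 5y^2 + 2y - 1, whose roots are the fourth
   powers of the roots of x^3 - x^2 - 1.  For the partial sums of a sequence
   obeying a linear recurrence, the same recurrence holds up to a constant
   defect, which here is read off from the first four partial sums. *)

From Stdlib Require Import ZArith Lia.
Open Scope Z_scope.

Lemma narayana_rec (n : nat) :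
  narayana (S (S (S n))) = narayana (S (S n)) + narayana n.
Proof. reflexivity. Qed.

Lemma narayana_like_step4 (u : nat -> Z) :
  (forall n, u (S (S (S n))) = u (S (S n)) + u n) ->
  forall n, u (12 + n)%nat = 5 * u (8 + n)%nat - 2 * u (4 + n)%nat + u n.
Proof.
  intros Hu n; cbn [Nat.add].
  (* every term reduces to a combination of u n, u (n+1), u (n+2) *)
  rewrite !Hu; ring.
Qed.

Lemma narayana_quadrisection_rec (b k : nat) :
  narayana (4 * S (S (S k)) + b) =
  5 * narayana (4 * S (S k) + b) - 2 * narayana (4 * S k + b) + narayana (4 * k + b).
Proof.
  replace (4 * S (S (S k)) + b)%nat with (12 + (4 * k + b))%nat by lia.
  replace (4 * S (S k) + b)%nat with (8 + (4 * k + b))%nat by lia.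
  replace (4 * S k + b)%nat with (4 + (4 * k + b))%nat by lia.
  apply narayana_like_step4, narayana_rec.
Qed.

Section PartialSumsRecurrence.

Variables (v s : nat -> Z) (a1 a2 a3 : Z).
Hypothesis v_rec : forall k, v (S (S (S k))) = a1 * v (S (S k)) + a2 * v (S k) + a3 * v k.
Hypothesis s_succ : forall r, s (S r) = s r + v (S r).

Definition rec_defect (r : nat) : Z :=
  s (S (S (S r))) - a1 * s (S (S r)) - a2 * s (S r) - a3 * s r.

Lemma rec_defect_succ (r : nat) : rec_defect (S r) = rec_defect r.
Proof. unfold rec_defect; rewrite !s_succ, (v_rec (S r)); ring. Qed.

Lemma rec_defect_const (r : nat) : rec_defect r = rec_defect 0.
Proof. induction r as [|r IH]; [reflexivity | now rewrite rec_defect_succ]. Qed.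

End PartialSumsRecurrence.

Lemma S4_rec_defect (b : nat) : (1 <= b <= 4)%nat ->
  rec_defect (S4 b) 5 (-2) 1 0 = cb b.
Proof. intros Hb; destruct b as [|[|[|[|[|b]]]]]; try lia; reflexivity. Qed.

Theorem theorem7 (b r : nat) :
  (1 <= b <= 4)%nat -> (3 <= r)%nat ->
  S4 b r = 5 * S4 b (r - 1) - 2 * S4 b (r - 2) + S4 b (r - 3) + cb b.
Proof.
  intros Hb Hr.
  destruct r as [|[|[|k]]]; try lia.
  cbn [Nat.sub]; rewrite Nat.sub_0_r.
  assert (Hdefect : rec_defect (S4 b) 5 (-2) 1 k = rec_defect (S4 b) 5 (-2) 1 0).
  { apply rec_defect_const with (v := fun j => narayana (4 * j + b)).
    - intros j; rewrite narayana_quadrisection_rec; ring.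
    - reflexivity. }
  rewrite S4_rec_defect in Hdefect by exact Hb.
  unfold rec_defect in Hdefect; lia.
Qed.
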